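(* Let $(X,\mathrm{d})$ be a metric space, $P\subseteq X$ finite with $n$ points, $r,\varepsilon>0$, and let $\mathcal{F}$ be an $(r,r_2,p_1,p_2)$-sensitive family of hash functions on $X$ with $r_2\le r(1+\varepsilon)$. For any query point $q\in X$, the output set $S$ of the query procedure of the structure $\mathcal{A}(P,r,\varepsilon)$ (described in the context) satisfies $N_P(q,r)\subseteq S$ with probability at least $1-n^{1-c\ln\frac52}$.
   Context: Notation: $N_P(x,r)$ is the set of points of $P\setminus\{x\}$ at distance at most $r$ from $x$. A family $\mathcal{F}$ of functions $X\to\mathbb{Z}$ with a probability distribution is $(r_1,r_2,p_1,p_2)$-sensitive ($r_1<r_2$, $1>p_1>p_2>0$) if for all $x,y\in X$: $\mathrm{d}(x,y)\le r_1\Rightarrow \Pr[f(x)=f(y)]\ge p_1$ and $\mathrm{d}(x,y)\ge r_2\Rightarrow \Pr[f(x)=f(y)]\le p_2$. Structure $\mathcal{A}(P,r,\varepsilon)$: let $\varrho=\ln p_1/\ln p_2$, $k=\lceil \ln n/\ln(1/p_2)\rceil$, $L=\lceil n^\varrho/p_1\rceil$, and let $\mathcal{G}$ be the family of maps $g=(f_1,\dots,f_k):X\to\mathbb{Z}^k$ whose coordinates are drawn independently from $\mathcal{F}$. For each of $\lceil c\ln n\rceil$ rounds ($c>0$ a fixed constant), independently draw $g_1,\dots,g_L$ from $\mathcal{G}$ and insert every $p\in P$ into hash table $H_j$ under key $g_j(p)$. Query: given $q$, for every round and every $j$, retrieve all points stored in $H_j$ under key $g_j(q)$ and insert each such $p$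 into $S$ iff $\mathrm{d}(q,p)\le r$; return $S$. *)

From HB Require Import structures.
From mathcomp Require Import all_boot all_order all_algebra.
From mathcomp Require Import all_classical all_reals all_analysis.
Set Implicit Arguments. Unset Strict Implicit. Unset Printing Implicit Defensive.
Import Order.TTheory GRing.Theory Num.Theory.
Local Open Scope classical_set_scope.
Local Open Scope ring_scope.

Definition is_metric (R : realType) (X : Type) (dist : X -> X -> R) : Prop :=
  [/\ forall x y, 0 <= dist x y,
      forall x y, dist x y = 0 <-> x = y,
      forall x y, dist x y = dist y x &
      forall x y z, dist x z <= dist x y + dist y z].

(* A family of hash functions X -> Z with a probability distribution:
   the family is a measurable space U of "labels", [ev u] is the hash
   function with label u, and [Pf] is the distribution. *)
Definition sensitive (R : realType) (X : Type) (dist : X -> X -> R)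
  (dU : measure_display) (U : measurableType dU) (Pf : probability U R)
  (ev : U -> X -> int) (r1 r2 p1 p2 : R) : Prop :=
  [/\ r1 < r2, 0 < p2, p2 < p1, p1 < 1 &
      forall x y,
        (dist x y <= r1 -> (p1%:E <= Pf [set u | ev u x = ev u y])%E) /\
        (r2 <= dist x y -> (Pf [set u | ev u x = ev u y] <= p2%:E)%E)].

Definition mutually_independent (R : realType) (d : measure_display)
  (Omega : measurableType d) (mu : probability Omega R) (I : finType)
  (dU : measure_display) (U : measurableType dU) (Y : I -> Omega -> U) : Prop :=
  forall (J : {set I}) (A : I -> set U),
    (forall i, i \in J -> measurable (A i)) ->
    mu (\bigcap_(i in [set i | i \in J]) (Y i @^-1` A i)) =
    (\prod_(i in J) mu (Y i @^-1` A i))%E.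

Definition rho (R : realType) (p1 p2 : R) : R := ln p1 / ln p2.
Definition num_k (R : realType) (p2 : R) (n : nat) : nat :=
  `|Num.ceil (ln (n%:R : R) / ln (p2^-1))|%N.
Definition num_L (R : realType) (p1 p2 : R) (n : nat) : nat :=
  `|Num.ceil (powR (n%:R : R) (rho p1 p2) / p1)|%N.
Definition num_rounds (R : realType) (c : R) (n : nat) : nat :=
  `|Num.ceil (c * ln (n%:R : R))|%N.

(* The hash function g = (f_1,...,f_k) drawn for round t, table j, coordinate i
   is ev (Y (t, j, i) omega).  Output set S of the query at q. *)
Definition query_output (R : realType) (X : eqType) (dist : X -> X -> R)
  (P : seq X) (r : R) (Rn Ln kn : nat) (dU : measure_display)
  (U : measurableType dU) (ev : U -> X -> int)
  (h : 'I_Rn * 'I_Ln * 'I_kn -> U) (q : X) : seq X :=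
  [seq p <- P | [exists t : 'I_Rn, exists j : 'I_Ln,
                   [forall i : 'I_kn, ev (h (t, j, i)) p == ev (h (t, j, i)) q]]
                && (dist q p <= r)].

Definition near_set (R : realType) (X : eqType) (dist : X -> X -> R)
  (P : seq X) (x : X) (r : R) : seq X :=
  [seq p <- P | (p != x) && (dist x p <= r)].

From HB Require Import structures.
From mathcomp Require Import all_boot all_order all_algebra.
From mathcomp Require Import all_classical all_reals all_analysis.
From mathcomp Require Import ring lra.
Import Order.TTheory GRing.Theory Num.Theory.
Local Open Scope classical_set_scope.
Local Open Scope ring_scope.

(* A point p of N_P(q, r) is found by one table g_j exactly when all k
   coordinates of g_j collide on p and q, which happens with probability
   f^k >= p1^k, where f = Pr[h(p) = h(q)] >= p1.  The R*L tables are independent,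
   so p is missed by all of them with probability (1 - f^k)^(RL), which is at
   most exp(-p1^k L R) <= exp(-R) <= n^(-c), because the choice of k gives
   p1^k >= p1 n^(-rho) and hence p1^k L >= 1.  A union bound over the at most n
   near points bounds the failure probability by n^(1-c) <= n^(1-c ln(5/2)). *)

Section RealProbability.
Context {R : realType} {d : measure_display} {Omega : measurableType d}
  (mu : probability Omega R).

Definition pr (A : set Omega) : R := fine (mu A).

Lemma prE {A} : measurable A -> mu A = (pr A)%:E.
Proof. by move=> mA; rewrite /pr fineK // fin_num_measure. Qed.

Lemma pr_ge0 A : 0 <= pr A.
Proof. exact/fine_ge0/measure_ge0. Qed.

Lemma pr_le1 {A} : measurable A -> pr A <= 1.
Proof. by move=> mA; rewrite -lee_fin -prE // probability_le1. Qed.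

Lemma prC {A} : measurable A -> pr (~` A) = 1 - pr A.
Proof.
move=> mA; apply: EFin_inj.
by rewrite -prE ?probability_setC ?prE //; exact: measurableC.
Qed.

Lemma prDI {A B} : measurable A -> measurable B ->
  pr A = pr (A `&` ~` B) + pr (A `&` B).
Proof.
move=> mA mB; have mAB : measurable (A `&` B) by exact: measurableI.
have mAnB : measurable (A `&` ~` B) by apply: measurableI => //; exact: measurableC.
by apply: EFin_inj; rewrite EFinD -!prE // -setDE -measureDI.
Qed.

Lemma prU_le {A B} : measurable A -> measurable B -> pr (A `|` B) <= pr A + pr B.
Proof.
move=> mA mB; rewrite -lee_fin EFinD -!prE //; first exact: measureU2.
exact: measurableU.
Qed.

Lemma pr_bigcup_le {T : eqType} {s : seq T} {B : T -> set Omega} {beta : R} :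
  (forall p, measurable (B p)) -> (forall p, p \in s -> pr (B p) <= beta) ->
  pr (\bigcup_(p in [set` s]) B p) <= (size s)%:R * beta.
Proof.
move=> mB; elim: s => [|x s IH] Bs_le.
  by rewrite set_nil bigcup_set0 /pr measure0 mul0r.
have -> : [set` x :: s] = x |` [set` s].
  by rewrite predeqE => y /=; rewrite inE; split => /predU1P.
rewrite bigcup_setU1 /= -add1n natrD mulrDl mul1r.
have mBs : measurable (\bigcup_(p in [set` s]) B p).
  exact: fin_bigcup_measurable (finite_seq s) (fun p _ => mB p).
apply: le_trans (prU_le (mB x) mBs) _; apply: lerD; first exact/Bs_le/mem_head.
by apply: IH => p ps; apply: Bs_le; rewrite in_cons ps orbT.
Qed.

End RealProbability.

Lemma bigcap_in_set0 {T : Type} {I : finType} (F : I -> set T) :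
  \bigcap_(i in [set` finset.set0]) F i = setT.
Proof. by apply/seteqP; split => x //= _ i /=; rewrite inE. Qed.

Lemma bigcap_in_setD1 {T : Type} {I : finType} (F : I -> set T) {J : {set I}} {a : I} :
  a \in J ->
  \bigcap_(i in [set` J]) F i =
  F a `&` \bigcap_(i in [set` J :\ a]) F i.
Proof.
move=> aJ; apply/seteqP; split => x /=.
- by move=> FJx; split=> [|i /=]; [exact: FJx | rewrite in_setD1 => /andP[_ /FJx]].
- move=> [Fax FJx] i /= iJ; have [->//|ia] := eqVneq i a.
  by apply: FJx; rewrite /= in_setD1 ia.
Qed.

Section ComplementIndependence.
Context {R : realType} {d : measure_display} {Omega : measurableType d}
  (mu : probability Omega R) {I : finType} {E : I -> set Omega} {s : R}.
Hypothesis measurable_E : forall i, measurable (E i).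
Hypothesis pr_bigcap_E :
  forall J : {set I}, pr mu (\bigcap_(i in [set` J]) E i) = s ^+ #|J|.

Lemma measurable_bigcap_in (F : I -> set Omega) (J : {set I}) :
  (forall i, measurable (F i)) -> measurable (\bigcap_(i in [set` J]) F i).
Proof. by move=> mF; apply: fin_bigcap_measurable => //; exact: finite_finset. Qed.

(* Complements of independent events are independent: induct on #|J|, moving
   one index a from J to K and splitting the event along E a (prDI). *)
Lemma pr_bigcapC_bigcap (J K : {set I}) : K \subset ~: J ->
  pr mu ((\bigcap_(i in [set` J]) ~` E i) `&`
         \bigcap_(i in [set` K]) E i) = (1 - s) ^+ #|J| * s ^+ #|K|.
Proof.
elim: {J}#|J| {-2}J (erefl #|J|) K => [|n IH] J cardJ K JK.
  move/eqP: cardJ; rewrite cards_eq0 => /eqP ->.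
  by rewrite bigcap_in_set0 setTI pr_bigcap_E cards0 expr0 mul1r.
have [a aJ] : exists a, a \in J by apply/set0Pn; rewrite -card_gt0 cardJ.
have aK : a \notin K by apply: contraL aJ => /(fintype.subsetP JK); rewrite inE.
have cardJa : #|J :\ a| = n by move: cardJ; rewrite (cardsD1 a J) aJ => -[].
have JaK : K \subset ~: (J :\ a) by rewrite (fintype.subset_trans JK) // finset.setCS subsetDl.
have JaaK : a |: K \subset ~: (J :\ a) by rewrite finset.subUset finset.sub1set !inE eqxx JaK.
set Z := (\bigcap_(i in [set` J :\ a]) ~` E i) `&`
         \bigcap_(i in [set` K]) E i.
have mZ : measurable Z.
  by apply: measurableI; apply: measurable_bigcap_in => // i; exact: measurableC.
have prZ := prDI mu mZ (measurable_E a).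
rewrite (IH _ cardJa _ JaK) cardJa in prZ.
have -> : (\bigcap_(i in [set` J]) ~` E i) `&`
          \bigcap_(i in [set` K]) E i = Z `&` ~` E a.
  by rewrite (bigcap_in_setD1 _ aJ) /Z; apply/seteqP; split => x /=; tauto.
have ZE : Z `&` E a = (\bigcap_(i in [set` J :\ a]) ~` E i) `&`
          \bigcap_(i in [set` a |: K]) E i.
  rewrite (bigcap_in_setD1 _ (setU11 a K)) setU1K // /Z.
  by apply/seteqP; split => x /=; tauto.
move: prZ; rewrite ZE (IH _ cardJa _ JaaK) cardsU1 aK add1n cardJa cardJ => prZ.
by apply: (addIr ((1 - s) ^+ n * s ^+ #|K|.+1)); rewrite -prZ !exprS; ring.
Qed.

End ComplementIndependence.

Lemma ln_5half_le1 (R : realType) : ln (5 / 2 : R) <= 1.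
Proof.
have e8 : expR (1 : R) = expR (8^-1) ^+ 8.
  by rewrite -expRM_natl; congr expR; rewrite divff.
have e8_ge : (9 / 8 : R) ^+ 8 <= expR (8^-1) ^+ 8.
  apply: lerXn2r; rewrite ?nnegrE ?expR_ge0 //.
  have := expR_ge1Dx (8^-1 : R); lra.
have le_98 : (5 / 2 : R) <= (9 / 8) ^+ 8 by rewrite !exprS expr0; lra.
rewrite -[leRHS](expRK 1) ler_ln ?posrE ?expR_gt0 //; lra.
Qed.

Lemma ceil_absz_itv {R : realType} {x : R} : 0 <= x ->
  x <= (`|Num.ceil x|%N)%:R < x + 1.
Proof.
move=> x_ge0; have ceil_ge0 : 0 <= Num.ceil x by rewrite ceil_ge0; lra.
rewrite natr_absz ger0_norm //.
have /andP[ceil_gt ->] := ceil_itv x.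
by move: ceil_gt; rewrite intrB /=; lra.
Qed.

Lemma one_sub_expn_le_expR {R : realType} (a : R) (m : nat) : 0 <= a <= 1 ->
  (1 - a) ^+ m <= expR (- (a * m%:R)).
Proof.
move=> /andP[a_ge0 a_le1]; rewrite mulrC -mulrN expRM_natl.
apply: lerXn2r; rewrite ?nnegrE ?expR_ge0 ?subr_ge0 //.
by have := expR_ge1Dx (- a); lra.
Qed.

Section HashParameters.
Variables (R : realType) (p1 p2 : R) (n : nat).
Hypotheses (p2_gt0 : 0 < p2) (p2_lt_p1 : p2 < p1) (p1_lt1 : p1 < 1).
Hypothesis n_gt1 : (1 < n)%N.

Let p1_gt0 : 0 < p1. Proof. exact: lt_trans p2_lt_p1. Qed.
Let n_gt0 : 0 < (n%:R : R). Proof. by rewrite ltr0n ltnW. Qed.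
Let lnn_gt0 : 0 < ln (n%:R : R). Proof. by apply: ln_gt0; rewrite ltr1n. Qed.

(* num_k p2 n < log_{1/p2} n + 1 and p1 ^ (log_{1/p2} n) = n ^ (- rho). *)
Lemma num_k_expr_ge : p1 <= p1 ^+ num_k p2 n * powR n%:R (rho p1 p2).
Proof.
have lnp1_lt0 : ln p1 < 0 by apply: ln_lt0; rewrite p1_gt0.
have lnp2_lt0 : ln p2 < 0 by apply: ln_lt0; rewrite p2_gt0 (lt_trans p2_lt_p1).
have lnp2V : ln p2^-1 = - ln p2 by rewrite lnV ?posrE.
set x := ln (n%:R : R) / ln p2^-1.
have x_gt0 : 0 < x by rewrite /x lnp2V divr_gt0 // oppr_gt0.
have k_lt : (num_k p2 n)%:R < x + 1 by case/andP: (ceil_absz_itv (ltW x_gt0)).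
rewrite /powR gt_eqF //.
have -> : p1 ^+ num_k p2 n = expR ((num_k p2 n)%:R * ln p1).
  by rewrite expRM_natl lnK // posrE.
rewrite -expRD -[leLHS](lnK (x := p1)) ?posrE // ler_expR.
have -> : rho p1 p2 * ln n%:R = - (x * ln p1) by rewrite /x lnp2V /rho; field; lra.
rewrite -mulNr -mulrDl -[leLHS]mul1r ler_nM2r //; lra.
Qed.

Lemma num_L_mulr_ge1 : 1 <= p1 ^+ num_k p2 n * (num_L p1 p2 n)%:R.
Proof.
have pow_gt0 : 0 < powR (n%:R : R) (rho p1 p2).
  by rewrite /powR gt_eqF // expR_gt0.
have /andP[L_ge _] := ceil_absz_itv (ltW (divr_gt0 pow_gt0 p1_gt0)).
rewrite -[num_L _ _ _]/`|Num.ceil (powR n%:R (rho p1 p2) / p1)|%N.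
apply: le_trans (ler_wpM2l (exprn_ge0 _ (ltW p1_gt0)) L_ge).
by rewrite mulrA ler_pdivlMr // mul1r num_k_expr_ge.
Qed.

End HashParameters.

Lemma lsh_failure_bound (R : realType) (p1 p2 c : R) (n : nat) :
  0 < p2 -> p2 < p1 -> p1 < 1 -> 0 < c ->
  n%:R * (1 - p1 ^+ num_k p2 n) ^+ (num_rounds c n * num_L p1 p2 n)
  <= powR n%:R (1 - c * ln (5 / 2)).
Proof.
move=> p2_gt0 p2_lt_p1 p1_lt1 c_gt0.
have p1_gt0 : 0 < p1 by exact: lt_trans p2_lt_p1.
have p1X_01 k : 0 <= p1 ^+ k <= 1 by rewrite exprn_ge0 ?exprn_ile1 // ltW.
case: n => [|[|n]]; first by rewrite mul0r powR_ge0.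
  have /andP[p1X_ge0 p1X_le1] := p1X_01 (num_k p2 1).
  by rewrite mulr1n powR1 mul1r exprn_ile1 // ?subr_ge0 // lerBlDr lerDl.
set N := n.+2; set alpha := p1 ^+ num_k p2 N; set m := num_rounds c N * num_L p1 p2 N.
have N_gt0 : 0 < (N%:R : R) by rewrite ltr0n.
have lnN_gt0 : 0 < ln (N%:R : R) by apply: ln_gt0; rewrite ltr1n.
have /andP[rounds_ge _] := ceil_absz_itv (ltW (mulr_gt0 c_gt0 lnN_gt0)).
rewrite -[`|_|%N]/(num_rounds c N) in rounds_ge.
have miss_le : (1 - alpha) ^+ m <= expR (- (c * ln N%:R)).
  apply: le_trans (one_sub_expn_le_expR _ m (p1X_01 _)) _.
  rewrite ler_expR lerN2 /m natrM mulrCA (le_trans rounds_ge) // ler_peMr //.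
  exact: num_L_mulr_ge1.
apply: le_trans (ler_wpM2l (ltW N_gt0) miss_le) _.
rewrite -[X in X * _](lnK (x := N%:R)) ?posrE // -expRD /powR gt_eqF //.
by rewrite ler_expR mulrBl mul1r lerD2l lerN2 mulrAC ger_pMr ?mulr_gt0 ?ln_5half_le1.
Qed.

Lemma set_mem_setT (T : finType) : [set` [set: T]%SET] = setT.
Proof. by rewrite predeqE => x; split => // _; exact: finset.in_setT. Qed.

Section QueryCompleteness.
Context {R : realType} {X : eqType} {dist : X -> X -> R} {P : seq X} {r : R}.
Context {dU : measure_display} {U : measurableType dU} {Pf : probability U R}.
Context {ev : U -> X -> int}.
Context {d : measure_display} {Omega : measurableType d} {mu : probability Omega R}.
Context {Rn Ln kn : nat} {Y : 'I_Rn * 'I_Ln * 'I_kn -> Omega -> U} {q : X}.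
Hypothesis measurable_collision : forall x y, measurable [set u | ev u x = ev u y].
Hypothesis measurable_Y : forall a, measurable_fun setT (Y a).
Hypothesis Y_distribution : forall a A, measurable A -> mu (Y a @^-1` A) = Pf A.
Hypothesis Y_indep : mutually_independent mu Y.

Definition collision (p : X) : set U := [set u | ev u p = ev u q].

Definition table_hit (p : X) (a : 'I_Rn * 'I_Ln) : set Omega :=
  \bigcap_i Y (a, i) @^-1` collision p.

Definition missed (p : X) : set Omega := \bigcap_a ~` table_hit p a.

Lemma measurable_table_hit p a : measurable (table_hit p a).
Proof.
apply: fin_bigcap_measurable => [|i _]; first exact: finite_finset.
by rewrite -[_ @^-1` _]setTI; apply: measurable_Y => //; exact: measurable_collision.
Qed.

Lemma measurable_missed p : measurable (missed p).
Proof.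
apply: fin_bigcap_measurable => [|a _]; first exact: finite_finset.
exact/measurableC/measurable_table_hit.
Qed.

Lemma pr_bigcap_table_hit p (J : {set 'I_Rn * 'I_Ln}) :
  pr mu (\bigcap_(a in [set` J]) table_hit p a) = (pr Pf (collision p) ^+ kn) ^+ #|J|.
Proof.
have -> : \bigcap_(a in [set` J]) table_hit p a =
    \bigcap_(b in [set` finset.setX J [set: 'I_kn]]) Y b @^-1` collision p.
  apply/seteqP; split => w /= hit.
  - by case=> a i /=; rewrite finset.in_setX => /andP[aJ _]; exact: hit.
  - by move=> a aJ i _; apply: (hit (a, i)); rewrite /= finset.in_setX aJ finset.in_setT.
have mcol : measurable (collision p) by exact: measurable_collision.
rewrite /pr (Y_indep _ (fun=> collision p)) => [|//].
under eq_bigr => b _ do rewrite (Y_distribution _ _ mcol) (prE Pf mcol).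
by rewrite prodEFin /= prodr_const cardsX cardsT card_ord -exprM mulnC.
Qed.

Lemma pr_missed p : pr mu (missed p) = (1 - pr Pf (collision p) ^+ kn) ^+ (Rn * Ln).
Proof.
have := pr_bigcapC_bigcap mu (measurable_table_hit p) (pr_bigcap_table_hit p) _ _
  (finset.sub0set (~: [set: 'I_Rn * 'I_Ln])).
by rewrite bigcap_in_set0 setIT set_mem_setT cards0 mulr1 cardsT card_prod !card_ord.
Qed.

Lemma pr_missed_le {p1 : R} p : 0 <= p1 -> p1 <= pr Pf (collision p) ->
  pr mu (missed p) <= (1 - p1 ^+ kn) ^+ (Rn * Ln).
Proof.
move=> p1_ge0 p1_le; rewrite pr_missed.
have f_le1 : pr Pf (collision p) <= 1 by apply/pr_le1/measurable_collision.
apply: lerXn2r; rewrite ?nnegrE ?subr_ge0 ?exprn_ile1 ?pr_ge0 ?(le_trans p1_le) //.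
by rewrite lerB // lerXn2r ?nnegrE ?pr_ge0.
Qed.

Lemma complete_queryE :
  [set w | {subset near_set dist P q r <= query_output dist P r ev (fun a => Y a w) q}] =
  ~` \bigcup_(p in [set` near_set dist P q r]) missed p.
Proof.
apply/seteqP; split => w /=.
- move=> found [p /= near_p missed_p]; have := found p near_p.
  rewrite mem_filter => /andP[/andP[/existsP[t /existsP[j /forallP hit]] _] _].
  by apply: (missed_p (t, j) I) => i _; exact/eqP/hit.
- move=> not_missed p near_p.
  have := near_p; rewrite mem_filter => /andP[/andP[_ qp] pP].
  rewrite mem_filter qp pP !andbT; apply: contraT => not_found.
  case: not_missed; exists p => // -[t j] _ hit; case/negP: not_found.
  by apply/existsP; exists t; apply/existsP; exists j; apply/forallP => i; apply/eqP/hit.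
Qed.

Lemma pr_complete_query_ge {p1 : R} : 0 <= p1 <= 1 ->
  {in near_set dist P q r, forall p, p1 <= pr Pf (collision p)} ->
  ((1 - (size P)%:R * (1 - p1 ^+ kn) ^+ (Rn * Ln))%:E <=
   mu [set w | {subset near_set dist P q r <= query_output dist P r ev (fun a => Y a w) q}])%E.
Proof.
move=> /andP[p1_ge0 p1_le1] near_collide.
have mbad := fin_bigcup_measurable (finite_seq (near_set dist P q r))
  (fun p _ => measurable_missed p).
rewrite complete_queryE (prE mu (measurableC mbad)) (prC mu mbad) lee_fin lerD2l lerN2.
apply: le_trans (pr_bigcup_le mu measurable_missed
  (fun p near_p => pr_missed_le p p1_ge0 (near_collide p near_p))) _.
rewrite ler_wpM2r ?ler_nat ?size_filter ?count_size //.
by rewrite exprn_ge0 // subr_ge0 exprn_ile1.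
Qed.

End QueryCompleteness.

Theorem lemma1 (R : realType) (X : eqType) (dist : X -> X -> R)
  (P : seq X) (r eps r2 p1 p2 c : R)
  (dU : measure_display) (U : measurableType dU) (Pf : probability U R)
  (ev : U -> X -> int)
  (d : measure_display) (Omega : measurableType d) (mu : probability Omega R)
  (Y : 'I_(num_rounds c (size P)) * 'I_(num_L p1 p2 (size P))
       * 'I_(num_k p2 (size P)) -> Omega -> U)
  (q : X) :
  is_metric dist ->
  uniq P ->
  0 < r -> 0 < eps -> 0 < c ->
  sensitive dist Pf ev r r2 p1 p2 ->
  r2 <= r * (1 + eps) ->
  (forall x y, measurable [set u | ev u x = ev u y]) ->
  (forall a, measurable_fun setT (Y a)) ->
  (forall a A, measurable A -> mu (Y a @^-1` A) = Pf A) ->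
  mutually_independent mu Y ->
  ((1 - powR ((size P)%:R : R) (1 - c * ln (5 / 2)))%:E <=
   mu [set omega | {subset near_set dist P q r <=
                    query_output dist P r ev (fun a => Y a omega) q}])%E.
Proof.
(* Completeness uses only the near-collision half of sensitivity; the
   far-collision bound, r2 and eps only matter for the query time. *)
move=> [_ _ dist_sym _] _ _ _ c_gt0 [_ p2_gt0 p2_lt_p1 p1_lt1 sensitive_near] _.
move=> mcollision mY Y_distribution Y_indep.
have p1_01 : 0 <= p1 <= 1 by rewrite !ltW // (lt_trans p2_gt0).
apply: le_trans (pr_complete_query_ge mcollision mY Y_distribution Y_indep p1_01 _).
  by rewrite lee_fin lerD2l lerN2; exact: lsh_failure_bound.
move=> p; rewrite mem_filter => /andP[/andP[_ near_p] _].
rewrite -lee_fin -prE; last exact: mcollision.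
by apply: (sensitive_near p q).1; rewrite dist_sym.
Qed.
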